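(* Let $S$ be a finite non-empty set and $\Sigma\subseteq\mathbb{R}_+\times S$ locally finite, and let $(X_n,\eta_n)$ be a time-homogeneous irreducible Markov chain on $\Sigma$ such that every line $\Lambda_k=\{x:(x,k)\in\Sigma\}$ is unbounded. Suppose that for some $p>2$ there is $C_p<\infty$ with $\mathbb{E}_{x,i}[|X_{n+1}-X_n|^p]\le C_p$ for all $(x,i)\in\Sigma$, and assume conditions (Q$_G$) and (D$_G$). Let $(a_i)_{i\in S}$ with $a_i\ge0$ for all $i$ be a solution of $d_i+\sum_{j\in S}(a_j-a_i)q_{ij}=0$ for all $i\in S$. Let $\widetilde X_n:=X_n+a_{\eta_n}$ and define $\widetilde\mu_i(y)=\mathbb{E}[\widetilde X_{n+1}-\widetilde X_n\mid\widetilde X_n=y,\eta_n=i]$, $\widetilde\sigma_i^2(y)=\mathbb{E}[(\widetilde X_{n+1}-\widetilde X_n)^2\mid\widetilde X_n=y,\eta_n=i]$. Either (i) set $\delta_4=0$; or (ii) suppose in addition that (Q$_G^+$) and (D$_G^+$) hold and set $\delta_4=\delta_2\wedge\delta_3\in(0,1)$. For $i\in S$ define \[c_i:=e_i+\sum_{j\in S}a_j\gamma_{ij},\qquad s_i^2:=t_i^2+2\sum_{j\in S}a_jd_{ij}+\sum_{j\in S}(a_j^2-a_i^2)q_{ij}.\] Then, as $x\to\infty$, $\widetilde\mu_i(x)=\frac{c_i}x+o(x^{-1-\delta_4})$ and $\widetilde\sigma_i^2(x)=s_i^2+o(x^{-\delta_4})$.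
   Context: Locally finite means $\Sigma\cap([0,r]\times S)$ is finite for every $r\ge0$. Write $\mathbb{E}_{x,i}[\cdot]=\mathbb{E}[\cdot\mid X_n=x,\eta_n=i]$, $q_{ij}(x)=\Pr[\eta_{n+1}=j\mid X_n=x,\eta_n=i]$, $\mu_i(x)=\mathbb{E}_{x,i}[X_{n+1}-X_n]$, $\sigma_i^2(x)=\mathbb{E}_{x,i}[(X_{n+1}-X_n)^2]$, $\mu_{ij}(x)=\mathbb{E}_{x,i}[(X_{n+1}-X_n)\mathbf 1\{\eta_{n+1}=j\}]$. (Q$_G$): there are $\gamma_{ij}\in\mathbb{R}$ with $q_{ij}(x)=q_{ij}+\gamma_{ij}/x+o(x^{-1})$ as $x\to\infty$, where $(q_{ij})$ is an irreducible stochastic matrix with stationary distribution $\pi$. (D$_G$): there are $d_i,e_i,d_{ij}\in\mathbb{R}$ and $t_i^2\ge0$ with at least one $t_i^2\ne0$, such that as $x\to\infty$: $\mu_i(x)=d_i+e_i/x+o(x^{-1})$, $\sigma_i^2(x)=t_i^2+o(1)$, $\mu_{ij}(x)=d_{ij}+o(1)$ for all $i,j$, and $\sum_i\pi_id_i=0$. (Q$_G^+$): there is $\delta_3\in(0,1)$ with $q_{ij}(x)=q_{ij}+\gamma_{ij}/x+o(x^{-1-\delta_3})$. (D$_G^+$): there is $\delta_2\in(0,1)$ with $\mu_i(x)=d_i+e_i/x+o(x^{-1-\delta_2})$, $\sigma_i^2(x)=t_i^2+o(x^{-\delta_2})$, $\mu_{ij}(x)=d_{ij}+o(x^{-\delta_2})$.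 *)

From mathcomp Require Import all_boot all_order all_algebra.
From mathcomp Require Import all_classical all_reals all_analysis.
Set Implicit Arguments. Unset Strict Implicit. Unset Printing Implicit Defensive.
Import Order.TTheory GRing.Theory Num.Theory.
Local Open Scope classical_set_scope.
Local Open Scope ring_scope.

Section Defs.
Context {R : realType} {S : finType}.

(* A one-step transition trkernel of a time-homogeneous Markov chain on a
   subset of R x S: from state (x,i), K x i j is the (sub-probability)
   measure describing "X_{n+1} in . and eta_{n+1} = j". *)
Definition trkernel := R -> S -> S -> {measure set R -> \bar R}.

Definition line (Sigma : set (R * S)) (k : S) : set R := [set x | Sigma (x, k)].

Definition in_Rplus_S (Sigma : set (R * S)) := forall u, Sigma u -> 0 <= u.1.

Definition locally_finite (Sigma : set (R * S)) :=
  forall r : R, 0 <= r -> finite_set (Sigma `&` [set u | 0 <= u.1 <= r]).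

Definition kernel_on (Sigma : set (R * S)) (K : trkernel) :=
  forall x i, Sigma (x, i) ->
    (\sum_(j : S) K x i j setT = 1)%E /\
    (forall j, K x i j (~` line Sigma j) = 0%E).

Definition step (K : trkernel) (u v : R * S) := (0 < K u.1 u.2 v.2 [set v.1])%E.

Definition irreducible_chain (Sigma : set (R * S)) (K : trkernel) :=
  forall u v, Sigma u -> Sigma v ->
    exists (n : nat) (w : nat -> R * S), w 0%N = u /\ w n = v /\
      (forall k, (k <= n)%N -> Sigma (w k)) /\
      (forall k, (k < n)%N -> step K (w k) (w k.+1)).

Definition unbounded_lines (Sigma : set (R * S)) :=
  forall k M, exists x, line Sigma k x /\ M < x.

Definition qx (K : trkernel) x i j : R := fine (K x i j setT).
Definition mux (K : trkernel) x i : R :=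
  \sum_(j : S) Rintegral (K x i j) setT (fun y => y - x).
Definition sig2x (K : trkernel) x i : R :=
  \sum_(j : S) Rintegral (K x i j) setT (fun y => (y - x) ^+ 2).
Definition muijx (K : trkernel) x i j : R :=
  Rintegral (K x i j) setT (fun y => y - x).

Definition pmoment_bound (Sigma : set (R * S)) (K : trkernel) (p Cp : R) :=
  forall x i, Sigma (x, i) ->
    (\sum_(j : S) \int[K x i j]_(y in setT) (`|y - x| `^ p)%:E <= Cp%:E)%E.

Definition o_infty (A : set R) (f g : R -> R) :=
  forall eps : R, 0 < eps ->
    exists x0 : R, forall x, A x -> x0 <= x -> `|f x| <= eps * g x.

Fixpoint qpow (q : S -> S -> R) (n : nat) (i j : S) : R :=
  match n with
  | 0%N => (i == j)%:R
  | n'.+1 => \sum_(k : S) qpow q n' i k * q k j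
  end.

Definition stochastic (q : S -> S -> R) :=
  (forall i j, 0 <= q i j) /\ (forall i, \sum_(j : S) q i j = 1).

Definition irreducible_matrix (q : S -> S -> R) :=
  forall i j, exists n, 0 < qpow q n i j.

Definition stationary (q : S -> S -> R) (pi : S -> R) :=
  (forall i, 0 <= pi i) /\ (\sum_(i : S) pi i = 1) /\
  (forall j, \sum_(i : S) pi i * q i j = pi j).

(* (Q_G) with remainder o(x^{-1-delta}); delta = 0 gives (Q_G),
   delta = delta3 gives (Q_G^+) *)
Definition QG_rate (Sigma : set (R * S)) (K : trkernel) (q gamma : S -> S -> R)
    (delta : R) :=
  forall i j, o_infty (line Sigma i)
    (fun x => qx K x i j - q i j - gamma i j / x) (fun x => x `^ (- 1 - delta)).

(* (D_G) asymptotics with remainder rates; delta = 0 gives (D_G),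
   delta = delta2 gives (D_G^+) *)
Definition DG_rate (Sigma : set (R * S)) (K : trkernel) (d e t2 : S -> R)
    (dd : S -> S -> R) (delta : R) :=
  forall i,
    o_infty (line Sigma i) (fun x => mux K x i - d i - e i / x)
      (fun x => x `^ (- 1 - delta)) /\
    o_infty (line Sigma i) (fun x => sig2x K x i - t2 i) (fun x => x `^ (- delta)) /\
    (forall j, o_infty (line Sigma i) (fun x => muijx K x i j - dd i j)
      (fun x => x `^ (- delta))).

(* the non-asymptotic parts of (D_G) *)
Definition DG_struct (pi d t2 : S -> R) :=
  (forall i, 0 <= t2 i) /\ (exists i, t2 i != 0) /\ \sum_(i : S) pi i * d i = 0.

(* transformed process  Xtilde_n = X_n + a_{eta_n}: conditional moments given
   Xtilde_n = y, eta_n = i, i.e. X_n = y - a_i, eta_n = i *)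
Definition mutilde (K : trkernel) (a : S -> R) y i : R :=
  \sum_(j : S) Rintegral (K (y - a i) i j) setT (fun z => (z + a j) - y).
Definition sig2tilde (K : trkernel) (a : S -> R) y i : R :=
  \sum_(j : S) Rintegral (K (y - a i) i j) setT (fun z => ((z + a j) - y) ^+ 2).

Definition tline (Sigma : set (R * S)) (a : S -> R) i : set R :=
  [set y | Sigma (y - a i, i)].

Definition c_coef (e a : S -> R) (gamma : S -> S -> R) i : R :=
  e i + \sum_(j : S) a j * gamma i j.
Definition s2_coef (t2 a : S -> R) (dd q : S -> S -> R) i : R :=
  t2 i + 2 * \sum_(j : S) a j * dd i j + \sum_(j : S) (a j ^+ 2 - a i ^+ 2) * q i j.

Definition conclusion (Sigma : set (R * S)) (K : trkernel) (a e t2 : S -> R)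
    (q gamma dd : S -> S -> R) (delta4 : R) :=
  forall i,
    o_infty (tline Sigma a i)
      (fun y => mutilde K a y i - c_coef e a gamma i / y)
      (fun y => y `^ (- 1 - delta4)) /\
    o_infty (tline Sigma a i)
      (fun y => sig2tilde K a y i - s2_coef t2 a dd q i)
      (fun y => y `^ (- delta4)).

End Defs.

From mathcomp Require Import all_boot all_order all_algebra.
From mathcomp Require Import all_classical all_reals all_analysis.
From mathcomp Require Import measurable_realfun ring lra.
Import Order.TTheory GRing.Theory Num.Theory.
Local Open Scope classical_set_scope.
Local Open Scope ring_scope.

(* Writing x = y - a_i for the position of the untransformed chain, the
   increment of Xtilde is X_{n+1} - X_n + a_{eta_{n+1}} - a_i, so its first two
   conditional moments are
     mu_i(x) + sum_j (a_j - a_i) q_ij(x)   and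
     sigma_i^2(x) + 2 sum_j (a_j - a_i) mu_ij(x) + sum_j (a_j - a_i)^2 q_ij(x),
   all integrals being finite thanks to the p-th moment bound. Substituting
   (Q_G) and (D_G), the constant part of the drift cancels by the equation
   defining a, while sum_j gamma_ij = 0 and sum_j d_ij = d_i because
   sum_j q_ij(x) = 1 and mu_i(x) = sum_j mu_ij(x) for all x. Since a_i >= 0,
   replacing x by y = x + a_i changes the error terms only by a constant factor
   and a term of order y^-2. *)

Lemma powR_le_add1_powR {R : realType} (t r p : R) :
  0 <= t -> 1 <= r <= p -> t `^ r <= 1 + t `^ p.
Proof.
move=> t0 /andP[r1 rp]; have := powR_ge0 t p.
have [t1|t1] := leP t 1.
  have : t `^ r <= 1 `^ r by apply: ge0_ler_powR; rewrite ?nnegrE; lra.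
  rewrite powR1; lra.
have : t `^ r <= t `^ p by apply: ler_powR; lra.
lra.
Qed.

Section KernelMoments.
Context {R : realType} {S : finType} {Sigma : set (R * S)} {K : @trkernel R S}
  {p Cp : R}.
Hypotheses (hK : kernel_on Sigma K) (p_gt2 : 2 < p)
  (hmom : pmoment_bound Sigma K p Cp).
Context {x : R} {i : S}.
Hypothesis Sxi : Sigma (x, i).

Lemma kernel_massE j : K x i j setT = (qx K x i j)%:E.
Proof.
have [Ksum _] := hK x i Sxi.
have K1 : (K x i j setT <= 1)%E.
  rewrite -Ksum (bigD1 j) //= leeDl //; apply: sume_ge0 => k _.
  exact: measure_ge0.
rewrite /qx fineK // ge0_fin_numE ?measure_ge0 //.
exact: le_lt_trans K1 (ltry _).
Qed.

Lemma sum_qx : \sum_(j : S) qx K x i j = 1.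
Proof.
have [Ksum _] := hK x i Sxi.
by rewrite /qx sum_fine ?Ksum // => j _; rewrite kernel_massE.
Qed.

Lemma pmoment_le j :
  (\int[K x i j]_(y in setT) (`|y - x| `^ p)%:E <= Cp%:E)%E.
Proof.
apply: le_trans (hmom x i Sxi); rewrite [leRHS](bigD1 j) //= leeDl //.
apply: sume_ge0 => k _; apply: integral_ge0 => y _.
by rewrite lee_fin powR_ge0.
Qed.

Let measurable_abs_incr_powR :
  measurable_fun setT (fun y : R => `|y - x| `^ p).
Proof.
apply: measurableT_comp (measurable_powR _) _.
by apply: measurableT_comp => //; exact: measurable_funB.
Qed.

Lemma integrable_moment_dominator j :
  (K x i j).-integrable setT (fun y => (1 + `|y - x| `^ p)%:E).
Proof.
apply/integrableP; split.
  by apply/measurable_EFinP; apply: measurable_funD.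
under eq_integral => y _ do
  rewrite gee0_abs ?lee_fin ?addr_ge0 ?powR_ge0 // EFinD.
rewrite ge0_integralD //; last exact/measurable_EFinP.
rewrite integral_cst // mul1e kernel_massE.
apply: le_lt_trans (leeD (lexx _) (pmoment_le j)) _.
by rewrite -EFinD ltry.
Qed.

Let integrable_dominated (f : R -> R) r j : measurable_fun setT f ->
  1 <= r <= p -> (forall y, `|f y| <= `|y - x| `^ r) ->
  (K x i j).-integrable setT (EFin \o f).
Proof.
move=> mf rp fle.
apply: (le_integrable measurableT _ _ (integrable_moment_dominator j)).
  exact/measurable_EFinP.
move=> y _ /=; rewrite lee_fin [leRHS]ger0_norm ?addr_ge0 ?powR_ge0 //.
exact: (le_trans (fle y) (powR_le_add1_powR _ _ _ (normr_ge0 (y - x)) rp)).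
Qed.

Lemma integrable_increment j :
  (K x i j).-integrable setT (EFin \o (fun y => y - x)).
Proof.
have p_ge1 : 1 <= p by apply: le_trans (ltW p_gt2); rewrite ler1n.
apply: (@integrable_dominated _ 1) => [|| y]; first exact: measurable_funB.
  by rewrite lexx p_ge1.
by rewrite powRr1.
Qed.

Lemma integrable_sq_increment j :
  (K x i j).-integrable setT (EFin \o (fun y => (y - x) ^+ 2)).
Proof.
apply: (@integrable_dominated _ 2) => [|| y].
- by apply: measurable_funX; exact: measurable_funB.
- by rewrite ler1n ltW.
- by rewrite powR_mulrn // normrX.
Qed.

Lemma integrable_cst j (c : R) :
  (K x i j).-integrable setT (EFin \o (fun _ => c)).
Proof.
apply/integrableP; split; first exact/measurable_EFinP.
by rewrite integral_cst //= kernel_massE -EFinM ltry.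
Qed.

Lemma Rintegral_increment_shift j c :
  Rintegral (K x i j) setT (fun y => y - x + c)
  = muijx K x i j + c * qx K x i j.
Proof.
rewrite RintegralD //; last exact: integrable_cst.
  by rewrite Rintegral_cst.
exact: integrable_increment.
Qed.

Lemma Rintegral_sq_increment_shift j c :
  Rintegral (K x i j) setT (fun y => (y - x + c) ^+ 2)
  = Rintegral (K x i j) setT (fun y => (y - x) ^+ 2)
    + 2 * c * muijx K x i j + c ^+ 2 * qx K x i j.
Proof.
have -> : Rintegral (K x i j) setT (fun y => (y - x + c) ^+ 2) =
    Rintegral (K x i j) setT
      (fun y => ((y - x) ^+ 2 + 2 * c * (y - x)) + c ^+ 2).
  by apply: eq_Rintegral => y _; ring.
have lin : (K x i j).-integrable setT (EFin \o (fun y => 2 * c * (y - x))).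
  apply: (eq_integrable measurableT _ _ _
    (integrableZl measurableT (2 * c) (integrable_increment j))).
  by move=> y _ /=; rewrite EFinM.
have quad : (K x i j).-integrable setT
    (EFin \o (fun y => (y - x) ^+ 2 + 2 * c * (y - x))).
  apply: (eq_integrable measurableT _ _ _
    (integrableD measurableT (integrable_sq_increment j) lin)).
  by move=> y _ /=; rewrite EFinD.
rewrite RintegralD //; last exact: integrable_cst.
rewrite RintegralD //; last exact: integrable_sq_increment.
rewrite Rintegral_cst // RintegralZl //; exact: integrable_increment.
Qed.

Lemma mutildeE (a : S -> R) :
  mutilde K a (x + a i) i = mux K x i + \sum_(j : S) (a j - a i) * qx K x i j.
Proof.
rewrite /mutilde /mux addrK -big_split /=; apply: eq_bigr => j _.
rewrite -Rintegral_increment_shift; apply: eq_Rintegral => y _; ring.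
Qed.

Lemma sig2tildeE (a : S -> R) :
  sig2tilde K a (x + a i) i = sig2x K x i
    + 2 * \sum_(j : S) (a j - a i) * muijx K x i j
    + \sum_(j : S) (a j - a i) ^+ 2 * qx K x i j.
Proof.
rewrite /sig2tilde /sig2x addrK mulr_sumr -!big_split /=.
apply: eq_bigr => j _.
rewrite (_ : Rintegral _ _ _ =
    Rintegral (K x i j) setT (fun y => (y - x + (a j - a i)) ^+ 2)).
  by rewrite Rintegral_sq_increment_shift; ring.
by apply: eq_Rintegral => y _; congr (_ ^+ 2); ring.
Qed.

End KernelMoments.

Section Eventually.
Context {R : realType}.
Implicit Types (A : set R) (P Q : R -> Prop).

Definition eventually_in A P := exists x0, forall x, A x -> x0 <= x -> P x.

Definition unbounded_above A := forall M, exists y, A y /\ M < y.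

Lemma eventually_inW {A P Q} :
  (forall x, P x -> Q x) -> eventually_in A P -> eventually_in A Q.
Proof. by move=> PQ [x0 H]; exists x0 => x Ax x0x; apply/PQ/H. Qed.

Lemma eventually_in_and {A P Q} : eventually_in A P -> eventually_in A Q ->
  eventually_in A (fun x => P x /\ Q x).
Proof.
move=> [x1 H1] [x2 H2]; exists (Num.max x1 x2) => x Ax.
by rewrite ge_max => /andP[x1x x2x]; split; [exact: H1 | exact: H2].
Qed.

Lemma eventually_in_ge {A} c : eventually_in A (fun x => c <= x).
Proof. by exists c. Qed.

Lemma eventually_in_forall {I : finType} {A} {P : I -> R -> Prop} :
  (forall j, eventually_in A (P j)) ->
  eventually_in A (fun x => forall j, P j x).
Proof.
move=> /choice[x0 Hx0]; exists (\sum_(j : I) `|x0 j|) => x Ax x0x j.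
apply: Hx0 => //; apply: le_trans x0x; apply: le_trans (ler_norm (x0 j)) _.
by rewrite (bigD1 j) //= lerDl sumr_ge0.
Qed.

Lemma eventually_in_witness {A P} :
  unbounded_above A -> eventually_in A P -> exists2 y, A y & P y.
Proof.
move=> unbA [x0 H]; have [y [Ay x0y]] := unbA x0.
by exists y => //; apply: H (ltW _).
Qed.

End Eventually.

Section LittleO.
Context {R : realType}.
Implicit Types (A : set R) (f g h : R -> R).

Lemma o_infty_le {A f h g} : eventually_in A (fun x => `|f x| <= `|h x|) ->
  o_infty A h g -> o_infty A f g.
Proof.
move=> fh ho eps eps0; apply: eventually_inW (eventually_in_and fh (ho _ eps0)).
by move=> x [] /le_trans; apply.
Qed.

Lemma o_infty_eq {A f h g} : eventually_in A (fun x => f x = h x) ->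
  o_infty A h g -> o_infty A f g.
Proof. by move=> fh; apply: o_infty_le; apply: eventually_inW fh => x ->. Qed.

Lemma o_infty_trans_le {A f g h} : eventually_in A (fun x => g x <= h x) ->
  o_infty A f g -> o_infty A f h.
Proof.
move=> gh fo eps eps0; apply: eventually_inW (eventually_in_and gh (fo _ eps0)).
by move=> x [gx /le_trans]; apply; exact: (ler_wpM2l (ltW eps0) gx).
Qed.

Lemma o_inftyD {A f h g} : o_infty A f g -> o_infty A h g ->
  o_infty A (fun x => f x + h x) g.
Proof.
move=> fo ho eps eps0; have eps20 : 0 < eps / 2 by rewrite divr_gt0.
apply: eventually_inW (eventually_in_and (fo _ eps20) (ho _ eps20)).
move=> x [fx hx]; apply: le_trans (ler_normD _ _) _; lra.
Qed.

(* No sign condition on [g] is needed: [`|f x| <= e * g x] forces [0 <= g x]. *)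
Lemma o_inftyZ {A f g} c : o_infty A f g -> o_infty A (fun x => c * f x) g.
Proof.
move=> fo eps eps0; have c1 : 0 < `|c| + 1 by rewrite ltr_pwDr.
have e0 : 0 < eps / (`|c| + 1) by rewrite divr_gt0.
apply: eventually_inW (fo _ e0) => x fx.
have g0 : 0 <= g x by rewrite -(pmulr_rge0 _ e0); apply: le_trans fx.
rewrite normrM; apply: le_trans (ler_wpM2l (normr_ge0 c) fx) _.
rewrite mulrA ler_wpM2r // -[leRHS](divfK (lt0r_neq0 c1)) mulrC.
by rewrite ler_pM2l // lerDl.
Qed.

Lemma o_inftyB {A f h g} : o_infty A f g -> o_infty A h g ->
  o_infty A (fun x => f x - h x) g.
Proof.
move=> fo ho; apply: o_inftyD fo _; apply: o_infty_eq (o_inftyZ (-1) ho).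
by exists 0 => x _ _; rewrite mulN1r.
Qed.

Lemma o_infty_sum {I : finType} {A} {f : I -> R -> R} {g} :
  (forall x, 0 <= g x) ->
  (forall j, o_infty A (f j) g) -> o_infty A (fun x => \sum_(j : I) f j x) g.
Proof.
move=> g0 fo eps eps0; set n : R := #|I|%:R.
have n1 : 0 < n + 1 by rewrite ltr_pwDr // ler0n.
have e0 : 0 < eps / (n + 1) by rewrite divr_gt0.
apply: eventually_inW (eventually_in_forall (fun j => fo j _ e0)) => x fx.
apply: le_trans (ler_norm_sum _ _ _) _.
apply: le_trans (ler_sum _ (fun j _ => fx j)) _.
rewrite sumr_const -mulr_natr -/n mulrAC ler_wpM2r //.
rewrite -[leRHS](divfK (lt0r_neq0 n1)) ler_pM2l ?divr_gt0 //.
by rewrite lerDl.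
Qed.

Lemma o_infty_self_eq0 {A h c} : unbounded_above A ->
  eventually_in A (fun x => 0 < h x) -> o_infty A (fun x => c * h x) h -> c = 0.
Proof.
move=> unbA h0 och; apply/normr0_eq0/le_anti; rewrite normr_ge0 andbT.
apply/ler_addgt0Pr => eps eps0; rewrite add0r.
have [x _ [hx]] :=
  eventually_in_witness unbA (eventually_in_and h0 (och _ eps0)).
by rewrite normrM (gtr0_norm hx) ler_pM2r.
Qed.

End LittleO.

Section PowerRates.
Context {R : realType}.
Implicit Types (A : set R) (f : R -> R).

Lemma le0_ger_powR {r x y : R} : r <= 0 -> 0 < x -> x <= y ->
  y `^ r <= x `^ r.
Proof.
move=> r0 x0 xy; have y0 := lt_le_trans x0 xy.
rewrite -(opprK r) (powRN x) (powRN y) lef_pV2 ?posrE ?powR_gt0 //.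
by apply: ge0_ler_powR; rewrite // ?nnegrE ?oppr_ge0 // ltW.
Qed.

Lemma eventually_powR_le {A} {r eps : R} : r < 0 -> 0 < eps ->
  eventually_in A (fun y => y `^ r <= eps).
Proof.
move=> r0 eps0; set Y := eps `^ r^-1; exists Y => y _ Yy.
have Y0 : 0 < Y by exact: powR_gt0.
have -> : eps = Y `^ r by rewrite /Y -powRrM mulVf ?lt_eqF ?powRr1 ?ltW.
exact: le0_ger_powR (ltW r0) Y0 Yy.
Qed.

Lemma o_infty_powR {A} {r s : R} : r < s ->
  o_infty A (fun y => y `^ r) (fun y => y `^ s).
Proof.
move=> rs eps eps0; have rs0 : r - s < 0 by rewrite subr_lt0.
apply: eventually_inW (eventually_in_and (eventually_in_ge 1)
  (eventually_powR_le rs0 eps0)) => y [y1 ysmall].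
rewrite ger0_norm ?powR_ge0 // -{1}(subrK s r) powRD; last first.
  by apply/implyP => _; rewrite gt_eqF // (lt_le_trans ltr01).
by rewrite ler_wpM2r ?powR_ge0.
Qed.

Lemma o_infty_rate_mono {A f} {r s : R} : r <= s ->
  o_infty A f (fun y => y `^ r) -> o_infty A f (fun y => y `^ s).
Proof.
move=> rs; apply: o_infty_trans_le.
by apply: eventually_inW (eventually_in_ge 1) => y y1; exact: ler_powR.
Qed.

Lemma o_infty_exprVn {A} {n} {r : R} : - n%:R < r ->
  o_infty A (fun y => y ^- n) (fun y => y `^ r).
Proof.
move=> nr; apply: (o_infty_eq _ (o_infty_powR nr)).
by apply: eventually_inW (eventually_in_ge 0) => y y0; rewrite powR_invn.
Qed.

Lemma powR_le_shift {x y r : R} : 0 < x -> 0 < y -> y <= 2 * x -> r <= 0 ->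
  x `^ r <= 2 `^ (- r) * y `^ r.
Proof.
move=> x0 y0 y2x r0; rewrite powRN ler_pdivlMl ?powR_gt0 //.
rewrite -powRM ?ler0n ?(ltW x0) //.
exact: le0_ger_powR r0 y0 y2x.
Qed.

Lemma o_infty_shift {A f} {b r : R} : 0 <= b -> r <= 0 ->
  o_infty A f (fun x => x `^ r) ->
  o_infty [set y | A (y - b)] (fun y => f (y - b)) (fun y => y `^ r).
Proof.
move=> b0 r0 fo eps eps0; set c := 2 `^ (- r).
have c0 : 0 < c by rewrite powR_gt0.
have [x0 Hx0] := fo _ (divr_gt0 eps0 c0).
exists (`|x0| + 2 * b + 1) => y Ayb yx0.
have := ler_norm x0; have := normr_ge0 x0 => x00 x0x0.
have x0y : x0 <= y - b by lra.
have yb0 : 0 < y - b by lra.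
apply: le_trans (Hx0 _ Ayb x0y) _.
have -> : eps * y `^ r = eps / c * (c * y `^ r).
  by rewrite mulrA divfK // lt0r_neq0.
by apply: ler_wpM2l; [rewrite divr_ge0 ?ltW | apply: powR_le_shift => //; lra].
Qed.

End PowerRates.

Section FiniteSums.
Context {R : realType} {S : finType}.
Implicit Types (w u v z : S -> R).

Lemma sum_mulrBr w u v :
  \sum_(j : S) w j * (u j - v j) =
  \sum_(j : S) w j * u j - \sum_(j : S) w j * v j.
Proof. by rewrite -sumrB; apply: eq_bigr => j _; rewrite mulrBr. Qed.

Lemma sum_subr_mul w z (c : R) :
  \sum_(j : S) (w j - c) * z j = \sum_(j : S) w j * z j - c * \sum_(j : S) z j.
Proof. by rewrite mulr_sumr -sumrB; apply: eq_bigr => j _; rewrite mulrBl. Qed.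

Lemma sum_mul_affine w u v z (y : R) :
  \sum_(j : S) w j * (u j - v j - z j * y) =
  \sum_(j : S) w j * u j - \sum_(j : S) w j * v j
  - (\sum_(j : S) w j * z j) * y.
Proof.
rewrite !sum_mulrBr mulr_suml; congr (_ - _).
by apply: eq_bigr => j _; ring.
Qed.

End FiniteSums.

Lemma dist_inv_shift_le {R : realType} {x b : R} : 0 < x -> 0 <= b ->
  `|x^-1 - (x + b)^-1| <= b * x ^- 2.
Proof.
move=> x0 b0; have xb0 : 0 < x + b by lra.
have -> : x^-1 - (x + b)^-1 = b * (x * (x + b))^-1.
  by field; rewrite !lt0r_neq0.
rewrite ger0_norm ?mulr_ge0 ?invr_ge0 ?mulr_ge0 ?(ltW x0) ?(ltW xb0) //.
apply: (ler_wpM2l b0); rewrite lef_pV2 ?posrE ?exprn_gt0 ?mulr_gt0 //.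
by rewrite expr2 ler_pM2l // lerDl.
Qed.

Section TransformedMoments.
Context {R : realType} {S : finType} {Sigma : set (R * S)} {K : @trkernel R S}
  {p Cp : R} {q gamma dd : S -> S -> R} {d e t2 a : S -> R} {delta : R}.
Hypotheses (hK : kernel_on Sigma K) (p_gt2 : 2 < p)
  (hmom : pmoment_bound Sigma K p Cp)
  (q_row1 : forall i, \sum_(j : S) q i j = 1)
  (a_solves : forall i, d i + \sum_(j : S) (a j - a i) * q i j = 0)
  (a_ge0 : forall i, 0 <= a i) (delta_ge0 : 0 <= delta) (delta_lt1 : delta < 1)
  (HQ : QG_rate Sigma K q gamma delta) (HD : DG_rate Sigma K d e t2 dd delta).
Hypothesis lines_unbounded : unbounded_lines Sigma.

Let inv_rate : - 1%:R < - delta.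
Proof. by have := delta_lt1; lra. Qed.

Let rate_le : -1 - delta <= - delta.
Proof. by have := delta_ge0; lra. Qed.

Section Line.
Context {i : S}.

Let line_unbounded : unbounded_above (line Sigma i) := lines_unbounded i.

Let d_solvedE : d i = - \sum_(j : S) (a j - a i) * q i j.
Proof. by apply/eqP; rewrite -addr_eq0 a_solves. Qed.

Lemma sum_gamma_eq0 : \sum_(j : S) gamma i j = 0.
Proof.
have sum_rem := o_infty_sum (fun x => powR_ge0 x _) (HQ i).
have o_inv : o_infty (line Sigma i)
    (fun x => - (\sum_(j : S) gamma i j) * x^-1) (fun x => x^-1).
  apply: o_infty_trans_le; last first.
    have rate_le1 : -1 - delta <= -1 by have := delta_ge0; lra.
    apply: o_infty_rate_mono rate_le1 _.
    apply: o_infty_eq sum_rem; exists 0 => x Lx _.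
    by rewrite !sumrB (sum_qx hK Lx) q_row1 subrr sub0r -mulr_suml mulNr.
  by apply: eventually_inW (eventually_in_ge 0) => x x0; rewrite powR_inv1.
apply/eqP; rewrite -oppr_eq0; apply/eqP.
apply: (o_infty_self_eq0 line_unbounded _ o_inv).
apply: eventually_inW (eventually_in_ge 1) => x x1.
by rewrite invr_gt0 (lt_le_trans ltr01).
Qed.

Lemma sum_dd_eq_d : \sum_(j : S) dd i j = d i.
Proof.
have [mu_rem [_ muij_rem]] := HD i.
have o_one : o_infty (line Sigma i) (fun x => (d i - \sum_(j : S) dd i j) * 1)
    (fun x => x `^ (- delta)).
  have e_rem := o_inftyZ (e i) (o_infty_exprVn (A := line Sigma i) inv_rate).
  apply: o_infty_eq (o_inftyB (o_inftyB (o_infty_sum (fun x => powR_ge0 x _)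
    muij_rem) (o_infty_rate_mono rate_le mu_rem)) e_rem).
  exists 0 => x _ _; rewrite sumrB /mux expr1; ring.
apply/eqP; rewrite eq_sym -subr_eq0; apply/eqP.
apply: (o_infty_self_eq0 (h := fun=> 1) line_unbounded).
  by exists 0 => x _ _; exact: ltr01.
apply: o_infty_trans_le (o_infty_rate_mono (_ : - delta <= 0) o_one).
  by exists 0 => x _ _; rewrite powRr0.
by rewrite oppr_le0.
Qed.

Lemma mutilde_line_rate :
  o_infty (line Sigma i)
    (fun x => mutilde K a (x + a i) i - c_coef e a gamma i / (x + a i))
    (fun x => x `^ (-1 - delta)).
Proof.
have [mu_rem _] := HD i.
have q_rem := o_infty_sum (fun x => powR_ge0 x _)
  (fun j => o_inftyZ (a j - a i) (HQ i j)).
have shift_rem : o_infty (line Sigma i)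
    (fun x => c_coef e a gamma i * (x^-1 - (x + a i)^-1))
    (fun x => x `^ (-1 - delta)).
  apply: o_infty_le (o_inftyZ (`|c_coef e a gamma i| * a i)
    (o_infty_exprVn (n := 2) (_ : - 2%:R < -1 - delta))); last first.
    by have := delta_lt1; lra.
  apply: eventually_inW (eventually_in_ge 1) => x x1.
  have x0 : 0 < x by exact: lt_le_trans ltr01 x1.
  rewrite normrM -mulrA [leRHS]ger0_norm; last first.
    by rewrite mulr_ge0 ?divr_ge0 ?exprn_ge0 ?(ltW x0).
  exact: (ler_wpM2l (normr_ge0 _) (dist_inv_shift_le x0 (a_ge0 i))).
apply: o_infty_eq (o_inftyD (o_inftyD mu_rem q_rem) shift_rem).
exists 0 => x Lx _.
rewrite (mutildeE hK p_gt2 hmom Lx) sum_mul_affine (sum_subr_mul a (gamma i)).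
rewrite sum_gamma_eq0 d_solvedE /c_coef; ring.
Qed.

Lemma sig2tilde_line_rate :
  o_infty (line Sigma i)
    (fun x => sig2tilde K a (x + a i) i - s2_coef t2 a dd q i)
    (fun x => x `^ (- delta)).
Proof.
have [_ [sig_rem muij_rem]] := HD i.
have muij_sum_rem := o_inftyZ 2 (o_infty_sum (fun x => powR_ge0 x _)
  (fun j => o_inftyZ (a j - a i) (muij_rem j))).
have q_sum_rem := o_infty_sum (fun x => powR_ge0 x _)
  (fun j => o_inftyZ ((a j - a i) ^+ 2) (o_infty_rate_mono rate_le (HQ i j))).
have inv_rem := o_inftyZ (\sum_(j : S) (a j - a i) ^+ 2 * gamma i j)
  (o_infty_exprVn (A := line Sigma i) inv_rate).
apply: o_infty_eq (o_inftyD (o_inftyD (o_inftyD sig_rem muij_sum_rem)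
  q_sum_rem) inv_rem).
exists 0 => x Lx _.
have sq_q : \sum_(j : S) (a j - a i) ^+ 2 * q i j =
    \sum_(j : S) (a j ^+ 2 - a i ^+ 2) * q i j
    - 2 * a i * \sum_(j : S) (a j - a i) * q i j.
  by rewrite mulr_sumr -sumrB; apply: eq_bigr => j _; ring.
rewrite (sig2tildeE hK p_gt2 hmom Lx) sum_mulrBr sum_mul_affine sq_q.
rewrite (sum_subr_mul a (dd i)) sum_dd_eq_d.
rewrite d_solvedE /s2_coef expr1; ring.
Qed.

End Line.

Lemma conclusion_of_rates : conclusion Sigma K a e t2 q gamma dd delta.
Proof.
move=> i; have rate_le0 : -1 - delta <= 0 by have := delta_ge0; lra.
split.
- apply: o_infty_eq (o_infty_shift (a_ge0 i) rate_le0 mutilde_line_rate).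
  by exists 0 => y _ _; rewrite subrK.
- apply: o_infty_eq (o_infty_shift (a_ge0 i) _ sig2tilde_line_rate).
    by exists 0 => y _ _; rewrite subrK.
  by rewrite oppr_le0.
Qed.

End TransformedMoments.

Section RateMonotonicity.
Context {R : realType} {S : finType} {Sigma : set (R * S)} {K : @trkernel R S}.

Lemma QG_rate_le {q gamma : S -> S -> R} {r s : R} : r <= s ->
  QG_rate Sigma K q gamma s -> QG_rate Sigma K q gamma r.
Proof.
by move=> rs HQ i j; apply: o_infty_rate_mono (HQ i j); rewrite lerD2l lerN2.
Qed.

Lemma DG_rate_le {d e t2 : S -> R} {dd : S -> S -> R} {r s : R} : r <= s ->
  DG_rate Sigma K d e t2 dd s -> DG_rate Sigma K d e t2 dd r.
Proof.
move=> rs HD i; have [mu_rem [sig_rem muij_rem]] := HD i.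
split; first by apply: o_infty_rate_mono mu_rem; rewrite lerD2l lerN2.
split; first by apply: o_infty_rate_mono sig_rem; rewrite lerN2.
by move=> j; apply: o_infty_rate_mono (muij_rem j); rewrite lerN2.
Qed.

End RateMonotonicity.

Theorem lemma5p1 (R : realType) (S : finType) (Sigma : set (R * S))
  (K : @trkernel R S) (p Cp : R) (q gamma dd : S -> S -> R)
  (pi d e t2 a : S -> R) :
  (0 < #|S|)%N ->
  in_Rplus_S Sigma -> locally_finite Sigma ->
  kernel_on Sigma K -> irreducible_chain Sigma K -> unbounded_lines Sigma ->
  2 < p -> pmoment_bound Sigma K p Cp ->
  stochastic q -> irreducible_matrix q -> stationary q pi ->
  QG_rate Sigma K q gamma 0 ->
  DG_rate Sigma K d e t2 dd 0 -> DG_struct pi d t2 ->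
  (forall i, 0 <= a i) ->
  (forall i, d i + \sum_(j : S) (a j - a i) * q i j = 0) ->
  conclusion Sigma K a e t2 q gamma dd 0 /\
  (forall delta2 delta3 : R, 0 < delta2 < 1 -> 0 < delta3 < 1 ->
     QG_rate Sigma K q gamma delta3 -> DG_rate Sigma K d e t2 dd delta2 ->
     conclusion Sigma K a e t2 q gamma dd (Num.min delta2 delta3)).
Proof.
move=> _ _ _ hK _ unb p_gt2 hmom [_ q_row1] _ _ HQ HD _ a_ge0 a_solves.
split; first exact: (conclusion_of_rates hK p_gt2 hmom q_row1 a_solves a_ge0
  (lexx 0) ltr01 HQ HD unb).
move=> d2 d3 /andP[d2_gt0 d2_lt1] /andP[d3_gt0 _] HQ3 HD2.
have min_le2 : Num.min d2 d3 <= d2 by rewrite ge_min lexx.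
have min_le3 : Num.min d2 d3 <= d3 by rewrite ge_min lexx orbT.
have min_ge0 : 0 <= Num.min d2 d3 by rewrite le_min !ltW.
exact: (conclusion_of_rates hK p_gt2 hmom q_row1 a_solves a_ge0 min_ge0
  (le_lt_trans min_le2 d2_lt1) (QG_rate_le min_le3 HQ3) (DG_rate_le min_le2 HD2)
  unb).
Qed.
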